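(* Let $n\ge 3$ and let $S$ be a double-$n$ string with diameter $d<n/2$, whose symbols are labeled $1,\dots,n$ in the order of their first occurrence in $S$. Then for each $1\le i\le d+1$, the number of symbols $j\in\{1,\dots,d+1\}\setminus\{i\}$ whose second occurrence lies at position-distance at most $d$ from the second occurrence of $i$ is at most $3d+i-n$.
   Context: A double-$n$ string is a string of length $2n$ over an alphabet of $n$ symbols in which each symbol appears exactly twice. Positions in the string are numbered $1,\dots,2n$; the position-distance between two entries is the absolute difference of their positions. The distance between two distinct symbols is the minimum position-distance between an occurrence of the first and an occurrence of the second. The diameter of a double-$n$ string is the maximum of the distance over all pairs of distinct symbols. *)

From mathcomp Require Import all_boot all_order all_algebra.
Set Implicit Arguments. Unset Strict Implicit. Unset Printing Implicit Defensive.

(* Strings are [seq nat]; symbols are 1..n.  Positions are 0-indexed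
   (position p here = position p+1 in the paper); distances are unaffected. *)

Definition pdist (p q : nat) : nat := (p - q) + (q - p).

Definition double_string (n : nat) (s : seq nat) : Prop :=
  size s = 2 * n /\ all (fun x => 0 < x <= n) s /\
  forall a, 0 < a <= n -> count_mem a s = 2.

Definition occ (s : seq nat) (a : nat) : seq nat :=
  [seq p <- iota 0 (size s) | nth 0 s p == a].

Definition first_occ (s : seq nat) (a : nat) : nat := nth 0 (occ s a) 0.
Definition second_occ (s : seq nat) (a : nat) : nat := nth 0 (occ s a) 1.

Definition sym_dist (s : seq nat) (a b : nat) : nat :=
  \big[minn/pdist (first_occ s a) (first_occ s b)]_(p <- occ s a)
     \big[minn/pdist (first_occ s a) (first_occ s b)]_(q <- occ s b) pdist p q.

Definition diameter (n : nat) (s : seq nat) : nat :=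
  \max_(1 <= a < n.+1) \max_(1 <= b < n.+1 | a != b) sym_dist s a b.

Definition labeled_by_first_occ (n : nat) (s : seq nat) : Prop :=
  forall a b, 0 < a -> a < b -> b <= n -> first_occ s a < first_occ s b.

From mathcomp Require Import all_boot all_order all_algebra.
From mathcomp Require Import zify.
Set Implicit Arguments. Unset Strict Implicit. Unset Printing Implicit Defensive.

(* Every symbol is at distance at most d from every other one, so a set of
   positions that meets a d-neighbourhood of both occurrences of a symbol a
   "covers" all n symbols and must therefore contain at least n positions.
   - Covering with the neighbourhood of the two occurrences of a shows that
     second occurrences lie beyond position d; hence positions 0..d hold
     first occurrences, and by the labeling first_occ j < j for j <= d+1.
   - Fix i <= d+1 and let T be the set of second occurrences of i and of the
     symbols j <= d+1 counted in the statement; T lies in the window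
     [si - d, si + d] around si = second_occ i.  Positions 0..fi+d
     (fi = first_occ i) together with the window minus T still cover all
     symbols, since a symbol whose second occurrence is in T has its first
     occurrence at most d.  Counting gives n <= fi + d + 1 + (2d + 1 - |T|),
     i.e. the number of counted symbols is at most 3d + i - n. *)

Lemma mem_occ s a p : (p \in occ s a) = (p < size s) && (nth 0 s p == a).
Proof. by rewrite /occ mem_filter mem_iota add0n andbC. Qed.

Lemma size_occ s a : size (occ s a) = count_mem a s.
Proof. by rewrite /occ size_filter -[in RHS](mkseq_nth 0 s) count_map. Qed.

Lemma occ_sorted s a : sorted ltn (occ s a).
Proof. exact: (sorted_filter ltn_trans _ (iota_ltn_sorted 0 _)). Qed.

Lemma bigmin_mem (I : Type) (r : seq I) (x : nat) (F : I -> nat) :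
  \big[minn/x]_(p <- r) F p \in x :: [seq F p | p <- r].
Proof.
elim: r => [|y r IH]; rewrite ?big_nil ?big_cons ?mem_head //=.
rewrite /minn; case: ltnP => _; first by rewrite !inE eqxx orbT.
by move: IH; rewrite !inE => /orP[->|->]; rewrite ?orbT.
Qed.

Lemma sym_dist_attained s a b :
  first_occ s a \in occ s a -> first_occ s b \in occ s b ->
  exists p q, [/\ p \in occ s a, q \in occ s b & sym_dist s a b = pdist p q].
Proof.
move=> Ha Hb; rewrite /sym_dist; set x := pdist _ _.
have := bigmin_mem (occ s a) x (fun p => \big[minn/x]_(q <- occ s b) pdist p q).
rewrite inE => /orP[/eqP ->|/mapP[p pa ->]]; first by exists (first_occ s a), (first_occ s b).
have := bigmin_mem (occ s b) x (pdist p).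
rewrite inE => /orP[/eqP ->|/mapP[q qb ->]]; first by exists (first_occ s a), (first_occ s b).
by exists p, q.
Qed.

Lemma sym_dist_le_diameter n s a b :
  0 < a <= n -> 0 < b <= n -> a != b -> sym_dist s a b <= diameter n s.
Proof.
move=> Ha Hb Hab; rewrite /diameter.
have Hrow : sym_dist s a b <= \max_(1 <= b < n.+1 | a != b) sym_dist s a b.
  by apply: (leq_bigmax_seq (F := fun b => sym_dist s a b)); rewrite ?mem_index_iota; lia.
apply: (leq_trans Hrow).
by apply: (leq_bigmax_seq (F := fun a => \max_(1 <= b < n.+1 | a != b) sym_dist s a b));
  rewrite ?mem_index_iota; lia.
Qed.

Lemma cover_count s (U L : seq nat) : uniq U ->
  (forall b, b \in U -> exists2 p, p \in L & nth 0 s p = b) -> size U <= size L.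
Proof.
move=> Uu HUL; rewrite -(size_map (nth 0 s) L).
by apply: uniq_leq_size => // b /HUL [p pL <-]; apply: map_f.
Qed.

Lemma size_filter_notin (T R : seq nat) : uniq T -> {subset T <= R} ->
  size [seq x <- R | x \notin T] + size T <= size R.
Proof.
move=> Tu TR; rewrite -(count_predC (mem T) R) size_filter addnC leq_add2r.
rewrite -size_filter; apply: uniq_leq_size => // x xT.
by rewrite mem_filter TR // andbT.
Qed.

Section DoubleString.

Variables (n : nat) (s : seq nat).
Hypothesis Hs : double_string n s.

Lemma size_double : size s = 2 * n.
Proof. by case: Hs. Qed.

Lemma occ_pair a : 0 < a <= n ->
  occ s a = [:: first_occ s a; second_occ s a] /\ first_occ s a < second_occ s a.
Proof.
case: Hs => _ [_ Hc] Ha; have := size_occ s a; rewrite Hc // /first_occ /second_occ.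
have := occ_sorted s a.
by case: (occ s a) => [|x [|y [|z r]]] //= /andP[-> _] _.
Qed.

Lemma mem_occ_pair a p : 0 < a <= n ->
  (p \in occ s a) = (p == first_occ s a) || (p == second_occ s a).
Proof. by move=> Ha; have [-> _] := occ_pair Ha; rewrite !inE. Qed.

Lemma occ_at a p : p \in occ s a -> p < 2 * n /\ nth 0 s p = a.
Proof. by rewrite mem_occ size_double => /andP[? /eqP]. Qed.

Lemma first_occ_in a : 0 < a <= n -> first_occ s a \in occ s a.
Proof. by move=> Ha; rewrite mem_occ_pair // eqxx. Qed.

Lemma second_occ_in a : 0 < a <= n -> second_occ s a \in occ s a.
Proof. by move=> Ha; rewrite mem_occ_pair // eqxx orbT. Qed.

Lemma symbol_range p : p < 2 * n -> 0 < nth 0 s p <= n.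
Proof.
case: Hs => Hsz [Hall _] Hp; move/allP: Hall; apply.
by apply: mem_nth; rewrite Hsz.
Qed.

Lemma second_occ_inj a b : 0 < a <= n -> 0 < b <= n ->
  second_occ s a = second_occ s b -> a = b.
Proof.
move=> Ha Hb Hab; have [_ <-] := occ_at (second_occ_in Ha).
by have [_ <-] := occ_at (second_occ_in Hb); rewrite Hab.
Qed.

Lemma close_occurrences a b : 0 < a <= n -> 0 < b <= n -> a != b ->
  exists p q, [/\ p \in occ s a, q \in occ s b & pdist p q <= diameter n s].
Proof.
move=> Ha Hb Hab.
have [p [q [pa qb Hpq]]] := sym_dist_attained (first_occ_in Ha) (first_occ_in Hb).
by exists p, q; rewrite -Hpq sym_dist_le_diameter.
Qed.

Hypothesis Hdiam : 2 * diameter n s < n.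

Lemma second_occ_gt_diameter a : 0 < a <= n -> diameter n s < second_occ s a.
Proof.
move=> Ha; set d := diameter n s; set u := first_occ s a; set v := second_occ s a.
rewrite ltnNge; apply/negP => Hvd.
have [_ Huv] := occ_pair Ha.
have [_ Hu] := occ_at (first_occ_in Ha).
have Hsize : size (rem u (iota 0 (v + d).+1)) = v + d.
  by rewrite size_rem ?size_iota // mem_iota; lia.
suff : n <= v + d by lia.
rewrite -Hsize -{1}(size_iota 1 n); apply: (cover_count (s := s) (iota_uniq 1 n)).
move=> b; rewrite mem_iota => Hb; have {}Hb : 0 < b <= n by lia.
have in_rem p : p != u -> p <= v + d -> p \in rem u (iota 0 (v + d).+1).
  by move=> Hpu Hp; rewrite (mem_rem_uniq _ (iota_uniq _ _)) !inE mem_iota Hpu; lia.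
case: (eqVneq b a) => [->|Hba].
  exists v; last by have [] := occ_at (second_occ_in Ha).
  by apply: in_rem; [rewrite neq_ltn Huv orbT | lia].
have [p [q [pb qa Hpq]]] := close_occurrences Hb Ha Hba.
have [_ Hp] := occ_at pb; exists p => //; apply: in_rem.
  by apply: contra_neq Hba => Hpu; rewrite -Hp Hpu Hu.
by move: qa; rewrite mem_occ_pair // => /orP[] /eqP Hq; rewrite /pdist -/u -/v Hq in Hpq; lia.
Qed.

Lemma prefix_first_occ p : p <= diameter n s ->
  0 < nth 0 s p <= n /\ first_occ s (nth 0 s p) = p.
Proof.
move=> Hp; have Hb := symbol_range (ltac:(lia) : p < 2 * n).
split => //; have : p \in occ s (nth 0 s p) by rewrite mem_occ size_double eqxx; lia.
rewrite mem_occ_pair // => /orP[/eqP Hpf|/eqP Hps]; first exact: esym Hpf.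
by have := second_occ_gt_diameter Hb; lia.
Qed.

Hypothesis Hlab : labeled_by_first_occ n s.

(* With the labeling, the symbols 1..d+1 have their first occurrence early:
   the j positions 0..j-1 would otherwise carry j distinct labels below j. *)
Lemma first_occ_lt j : 0 < j <= (diameter n s).+1 -> first_occ s j < j.
Proof.
move=> Hj; rewrite ltnNge; apply/negP => Hfj.
suff : size (map (nth 0 s) (iota 0 j)) <= size (iota 1 j.-1).
  by rewrite size_map !size_iota; lia.
apply: uniq_leq_size.
  rewrite map_inj_in_uniq ?iota_uniq // => p q; rewrite !mem_iota => Hp Hq Hpq.
  have [_ <-] := prefix_first_occ (ltac:(lia) : p <= diameter n s).
  have [_ <-] := prefix_first_occ (ltac:(lia) : q <= diameter n s).
  by rewrite Hpq.
move=> b /mapP [p]; rewrite mem_iota => Hp ->.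
have [Hb Hf] := prefix_first_occ (ltac:(lia) : p <= diameter n s).
rewrite mem_iota; apply/andP; split; first lia.
rewrite ltnNge; apply/negP => Hbj.
case: (ltngtP j (nth 0 s p)) => Hc.
- by have := Hlab (ltac:(lia) : 0 < j) Hc (ltac:(lia) : nth 0 s p <= n); lia.
- by lia.
- by move: Hf; rewrite -Hc; lia.
Qed.

Lemma window_cover i (T : seq nat) : 0 < i <= (diameter n s).+1 ->
  {subset T <= [seq second_occ s j | j <- iota 1 (diameter n s).+1]} ->
  forall b, 0 < b <= n ->
  exists2 p, p \in iota 0 (first_occ s i + diameter n s).+1 ++
               [seq x <- iota (second_occ s i - diameter n s) (2 * diameter n s + 1)
                  | x \notin T]
          & nth 0 s p = b.
Proof.
move=> Hi HT b Hb; set d := diameter n s; set fi := first_occ s i.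
have Hi' : 0 < i <= n by lia.
have [_ Hfi] := occ_at (first_occ_in Hi').
case: (eqVneq b i) => [->|Hbi].
  by exists fi; rewrite // mem_cat mem_iota; lia.
have [p [q [pb qi Hpq]]] := close_occurrences Hb Hi' Hbi.
have [_ Hp] := occ_at pb.
move: qi; rewrite mem_occ_pair // => /orP[] /eqP Hq; rewrite /pdist Hq -/fi -/d in Hpq.
  by exists p; rewrite // mem_cat mem_iota; lia.
case: (boolP (p \in T)) => [/HT /mapP[j] | HpT].
  rewrite mem_iota => Hj Hpj; have Hj' : 0 < j <= n by lia.
  have [_ Hsj] := occ_at (second_occ_in Hj').
  have Hbj : b = j by rewrite -Hp Hpj Hsj.
  have [_ Hfj] := occ_at (first_occ_in Hj').
  exists (first_occ s j); last by rewrite Hfj Hbj.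
  by have := first_occ_lt (ltac:(lia) : 0 < j <= d.+1); rewrite mem_cat mem_iota; lia.
by exists p; rewrite // mem_cat mem_filter HpT !mem_iota; lia.
Qed.

Lemma near_seconds_bound i : 0 < i <= (diameter n s).+1 ->
  n + count (fun j => (j != i) &&
               (pdist (second_occ s i) (second_occ s j) <= diameter n s))
        (iota 1 (diameter n s).+1)
  <= i + 3 * diameter n s.
Proof.
move=> Hi; set d := diameter n s; set si := second_occ s i; set P := fun j => _.
have Hi' : 0 < i <= n by lia.
set J := [seq j <- iota 1 d.+1 | P j].
have HJ j : j \in J -> [/\ 0 < j <= d.+1, j != i & pdist si (second_occ s j) <= d].
  by rewrite mem_filter mem_iota => /andP[/andP[Hji Hjd] Hj]; split; lia.
set T := si :: map (second_occ s) J.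
have Tu : uniq T.
  rewrite /T cons_uniq; apply/andP; split.
    apply/mapP => -[j /HJ[Hj Hji _] Hsj].
    by move: Hji; rewrite (second_occ_inj Hi' (ltac:(lia) : 0 < j <= n) Hsj) eqxx.
  rewrite map_inj_in_uniq ?filter_uniq ?iota_uniq // => j k /HJ[Hj _ _] /HJ[Hk _ _].
  by apply: second_occ_inj; lia.
have Twin : {subset T <= iota (si - d) (2 * d + 1)}.
  move=> x; rewrite inE mem_iota => /orP[/eqP ->|/mapP[j /HJ[_ _]]]; first lia.
  by rewrite /pdist => Hj ->; lia.
have TD : {subset T <= [seq second_occ s j | j <- iota 1 d.+1]}.
  move=> x; rewrite inE => /orP[/eqP ->|/mapP[j /HJ[Hj _ _] ->]];
    by apply: map_f; rewrite mem_iota; lia.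
set W := [seq x <- iota (si - d) (2 * d + 1) | x \notin T].
have HW : size W + (size J).+1 <= 2 * d + 1.
  by have := size_filter_notin Tu Twin; rewrite size_iota /T /= size_map.
have Hn : n <= (first_occ s i + d).+1 + size W.
  rewrite -{1}(size_iota 1 n) -(size_iota 0 (first_occ s i + d).+1) -size_cat.
  apply: (cover_count (s := s) (iota_uniq 1 n)) => b; rewrite mem_iota => Hb.
  by apply: (window_cover Hi TD); lia.
have := first_occ_lt Hi; rewrite -size_filter -/J; lia.
Qed.

End DoubleString.

Theorem corollary3p5 (n : nat) (s : seq nat) (d : nat) :
  3 <= n ->
  double_string n s ->
  labeled_by_first_occ n s ->
  d = diameter n s ->
  2 * d < n ->
  forall i : nat, 1 <= i <= d.+1 ->
    ((count (fun j => (j != i) && (pdist (second_occ s i) (second_occ s j) <= d)%N)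
            (iota 1 d.+1))%:Z
     <= (3 * d + i)%:Z - n%:Z)%R.
Proof.
move=> _ Hs Hlab -> Hdiam i Hi.
have := near_seconds_bound Hs Hdiam Hlab Hi.
lia.
Qed.
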